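(* Let $\mathcal{M}$ be a possible-world model such that the modal accessibility relation $R_m$ is reflexive and transitive. If two terms $t$ and $u$ of type $A$ in context $\Gamma$ of $\mathrm{IS4}_C$ are equivalent, then the functions $[\![t]\!]$ and $[\![u]\!] : \forall w.\, [\![\Gamma]\!]_w \to [\![A]\!]_w$ as determined by $\mathcal{M}$ are equal.
   Context: A possible-world model is a frame $(W, R_i, R_m)$ ($R_i$ reflexive and transitive; factorization: $w \mathrel{R_m} v$, $v \mathrel{R_i} v'$ imply some $w'$ with $w \mathrel{R_i} w'$, $w' \mathrel{R_m} v'$) with a valuation $V_\iota$ monotone along $R_i$, subject to coherence conditions (category laws, functoriality of factorization in both arguments, associativity/unit laws for the reflexivity and transitivity proofs of $R_m$). Interpretation: $[\![\iota]\!]_w = V_{\iota,w}$, $[\![A\to B]\!]_w = \forall w'.\, w \mathrel{R_i} w' \to [\![A]\!]_{w'} \to [\![B]\!]_{w'}$, $[\![\Box A]\!]_w = \forall w'.\, w \mathrel{R_i} w' \to \forall v.\, w' \mathrel{R_m} v \to [\![A]\!]_v$, $[\![\cdot]\!]_w=\top$, $[\![\Gamma,A]\!]_w = [\![\Gamma]\!]_w\times[\![A]\!]_w$, $[\![\Gamma,\mathsf{lock}]\!]_w = \sum_u [\![\Gamma]\!]_u \times (u \mathrel{R_m} w)$, where $\mathsf{lock}$ is the context lock. $\mathrm{IS4}_C$: types $A ::= \iota \mid A\to B \mid \Box A$, contexts $\Gamma ::= \cdot \mid \Gamma,A \mid \Gamma,\mathsf{lock}$; $\Delta \mathrel{R}\Gamma$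 iff $\Gamma$ extends $\Delta$ by any types and locks; terms of STLC plus $\mathsf{box}\,t:\Box A$ in $\Gamma$ from $t:A$ in $\Gamma,\mathsf{lock}$, and $\mathsf{unbox}(t,e):A$ in $\Gamma$ from $t:\Box A$ in $\Delta$ and $e:\Delta\mathrel{R}\Gamma$; equations: function $\beta,\eta$, $\mathsf{unbox}(\mathsf{box}\,t,e)\equiv t[(\mathrm{id},e)]$, and $t \equiv \mathsf{box}(\mathsf{unbox}(t,e_1))$ with $e_1:\Gamma\mathrel{R}\Gamma,\mathsf{lock}$ adding one lock. *)

From Stdlib Require Import FunctionalExtensionality ProofIrrelevance.


Inductive Ty : Type :=
| Base : Ty
| Arr : Ty -> Ty -> Ty
| Box : Ty -> Ty.

Inductive Ctx : Type :=
| Nil : Ctx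
| Snoc : Ctx -> Ty -> Ctx
| Lock : Ctx -> Ctx.

(* de Bruijn variables: a variable never crosses a lock *)
Inductive Var : Ctx -> Ty -> Type :=
| ze : forall G A, Var (Snoc G A) A
| su : forall G A B, Var G A -> Var (Snoc G B) A.
Arguments ze {G A}.
Arguments su {G A B} x.

(* Ext D G  :  D R G, i.e. G extends D by any types and locks *)
Inductive Ext : Ctx -> Ctx -> Type :=
| ext_nil : forall G, Ext G G
| ext_snoc : forall D G A, Ext D G -> Ext D (Snoc G A)
| ext_lock : forall D G, Ext D G -> Ext D (Lock G).
Arguments ext_nil {G}.
Arguments ext_snoc {D G A} e.
Arguments ext_lock {D G} e.

Inductive Tm : Ctx -> Ty -> Type :=
| var : forall G A, Var G A -> Tm G A
| lam : forall G A B, Tm (Snoc G A) B -> Tm G (Arr A B)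
| app : forall G A B, Tm G (Arr A B) -> Tm G A -> Tm G B
| box : forall G A, Tm (Lock G) A -> Tm G (Box A)
| unbox : forall D G A, Tm D (Box A) -> Ext D G -> Tm G A.
Arguments var {G A} x.
Arguments lam {G A B} t.
Arguments app {G A B} t u.
Arguments box {G A} t.
Arguments unbox {D G A} t e.

Fixpoint ext_trans D G G' (e1 : Ext D G) (e2 : Ext G G') {struct e2} : Ext D G' :=
  match e2 in Ext G G' return Ext D G -> Ext D G' with
  | ext_nil => fun e1 => e1
  | ext_snoc e => fun e1 => ext_snoc (ext_trans D _ _ e1 e)
  | ext_lock e => fun e1 => ext_lock (ext_trans D _ _ e1 e)
  end e1.
Arguments ext_trans {D G G'} e1 e2.

Fixpoint Ren (G D : Ctx) : Type :=
  match D with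
  | Nil => unit
  | Snoc D A => (Ren G D * Var G A)%type
  | Lock D => {G' : Ctx & (Ren G' D * Ext G' G)%type}
  end.

Fixpoint wkRen G B D {struct D} : Ren G D -> Ren (Snoc G B) D :=
  match D return Ren G D -> Ren (Snoc G B) D with
  | Nil => fun _ => tt
  | Snoc D A => fun r => (wkRen G B D (fst r), su (snd r))
  | Lock D => fun r =>
      existT (fun G' => (Ren G' D * Ext G' (Snoc G B))%type)
             (projT1 r) (fst (projT2 r), ext_snoc (snd (projT2 r)))
  end.
Arguments wkRen {G} B {D} r.

Fixpoint idRen G : Ren G G :=
  match G return Ren G G with
  | Nil => tt
  | Snoc G A => (wkRen A (idRen G), ze)
  | Lock G => existT (fun G' => (Ren G' G * Ext G' (Lock G))%type)
                     G (idRen G, ext_lock ext_nil)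
  end.

Fixpoint renVar G D A (x : Var D A) {struct x} : Ren G D -> Var G A :=
  match x in Var D A return Ren G D -> Var G A with
  | ze => fun r => snd r
  | su x => fun r => renVar G _ _ x (fst r)
  end.
Arguments renVar {G D A} x r.

Fixpoint factorRen G D0 D (e : Ext D0 D) {struct e}
  : Ren G D -> {G0 : Ctx & (Ren G0 D0 * Ext G0 G)%type} :=
  match e in Ext D0 D return Ren G D -> {G0 : Ctx & (Ren G0 D0 * Ext G0 G)%type} with
  | ext_nil => fun r => existT _ G (r, ext_nil)
  | ext_snoc e => fun r => factorRen G _ _ e (fst r)
  | ext_lock e => fun r =>
      let f := factorRen (projT1 r) _ _ e (fst (projT2 r)) in
      existT _ (projT1 f) (fst (projT2 f), ext_trans (snd (projT2 f)) (snd (projT2 r)))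
  end.
Arguments factorRen {G D0 D} e r.

Fixpoint ren G D A (t : Tm D A) {struct t} : Ren G D -> Tm G A :=
  match t in Tm D A return Ren G D -> Tm G A with
  | var x => fun r => var (renVar x r)
  | @lam D A B t => fun r => lam (ren (Snoc G A) _ _ t ((wkRen A r, ze) : Ren (Snoc G A) (Snoc D A)))
  | app t u => fun r => app (ren G _ _ t r) (ren G _ _ u r)
  | @box D A t => fun r =>
      box (ren (Lock G) _ _ t (existT (fun G' => (Ren G' D * Ext G' (Lock G))%type)
                         G (r, ext_lock ext_nil) : Ren (Lock G) (Lock D)))
  | unbox t e => fun r =>
      let f := factorRen e r in
      unbox (ren (projT1 f) _ _ t (fst (projT2 f))) (snd (projT2 f))
  end.
Arguments ren {G D A} t r.

Definition wkTm {G} B {A} (t : Tm G A) : Tm (Snoc G B) A := ren t (wkRen B (idRen G)).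

Fixpoint Sub (G D : Ctx) : Type :=
  match D with
  | Nil => unit
  | Snoc D A => (Sub G D * Tm G A)%type
  | Lock D => {G' : Ctx & (Sub G' D * Ext G' G)%type}
  end.

Fixpoint wkSub G B D {struct D} : Sub G D -> Sub (Snoc G B) D :=
  match D return Sub G D -> Sub (Snoc G B) D with
  | Nil => fun _ => tt
  | Snoc D A => fun s => (wkSub G B D (fst s), wkTm B (snd s))
  | Lock D => fun s =>
      existT (fun G' => (Sub G' D * Ext G' (Snoc G B))%type)
             (projT1 s) (fst (projT2 s), ext_snoc (snd (projT2 s)))
  end.
Arguments wkSub {G} B {D} s.

Fixpoint idSub G : Sub G G :=
  match G return Sub G G with
  | Nil => tt
  | Snoc G A => (wkSub A (idSub G), var ze)
  | Lock G => existT (fun G' => (Sub G' G * Ext G' (Lock G))%type)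
                     G (idSub G, ext_lock ext_nil)
  end.

Fixpoint substVar G D A (x : Var D A) {struct x} : Sub G D -> Tm G A :=
  match x in Var D A return Sub G D -> Tm G A with
  | ze => fun s => snd s
  | su x => fun s => substVar G _ _ x (fst s)
  end.
Arguments substVar {G D A} x s.

Fixpoint factorSub G D0 D (e : Ext D0 D) {struct e}
  : Sub G D -> {G0 : Ctx & (Sub G0 D0 * Ext G0 G)%type} :=
  match e in Ext D0 D return Sub G D -> {G0 : Ctx & (Sub G0 D0 * Ext G0 G)%type} with
  | ext_nil => fun s => existT _ G (s, ext_nil)
  | ext_snoc e => fun s => factorSub G _ _ e (fst s)
  | ext_lock e => fun s =>
      let f := factorSub (projT1 s) _ _ e (fst (projT2 s)) in
      existT _ (projT1 f) (fst (projT2 f), ext_trans (snd (projT2 f)) (snd (projT2 s)))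
  end.
Arguments factorSub {G D0 D} e s.

Fixpoint subst G D A (t : Tm D A) {struct t} : Sub G D -> Tm G A :=
  match t in Tm D A return Sub G D -> Tm G A with
  | var x => fun s => substVar x s
  | @lam D A B t => fun s =>
      lam (subst (Snoc G A) _ _ t ((wkSub A s, var ze) : Sub (Snoc G A) (Snoc D A)))
  | app t u => fun s => app (subst G _ _ t s) (subst G _ _ u s)
  | @box D A t => fun s =>
      box (subst (Lock G) _ _ t (existT (fun G' => (Sub G' D * Ext G' (Lock G))%type)
                           G (s, ext_lock ext_nil) : Sub (Lock G) (Lock D)))
  | unbox t e => fun s =>
      let f := factorSub e s in
      unbox (subst (projT1 f) _ _ t (fst (projT2 f))) (snd (projT2 f))
  end.
Arguments subst {G D A} t s.

Inductive Conv : forall {G A}, Tm G A -> Tm G A -> Prop :=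
| c_refl : forall G A (t : Tm G A), Conv t t
| c_sym : forall G A (t u : Tm G A), Conv t u -> Conv u t
| c_trans : forall G A (t u v : Tm G A), Conv t u -> Conv u v -> Conv t v
| c_lam : forall G A B (t t' : Tm (Snoc G A) B), Conv t t' -> Conv (lam t) (lam t')
| c_app : forall G A B (t t' : Tm G (Arr A B)) (u u' : Tm G A),
    Conv t t' -> Conv u u' -> Conv (app t u) (app t' u')
| c_box : forall G A (t t' : Tm (Lock G) A), Conv t t' -> Conv (box t) (box t')
| c_unbox : forall D G A (t t' : Tm D (Box A)) (e : Ext D G),
    Conv t t' -> Conv (unbox t e) (unbox t' e)
| c_fun_beta : forall G A B (t : Tm (Snoc G A) B) (u : Tm G A),
    Conv (app (lam t) u) (subst t ((idSub G, u) : Sub G (Snoc G A)))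
| c_fun_eta : forall G A B (t : Tm G (Arr A B)),
    Conv t (lam (app (wkTm A t) (var ze)))
| c_box_beta : forall D G A (t : Tm (Lock D) A) (e : Ext D G),
    Conv (unbox (box t) e)
         (subst t (existT (fun G' => (Sub G' D * Ext G' G)%type) D (idSub D, e)
                   : Sub G (Lock D)))
| c_box_eta : forall G A (t : Tm G (Box A)),
    Conv t (box (unbox t (ext_lock ext_nil))).

Record Model : Type := {
  W : Type;
  Ri : W -> W -> Type;
  Rm : W -> W -> Type;
  refl_i : forall w, Ri w w;
  trans_i : forall {w1 w2 w3}, Ri w1 w2 -> Ri w2 w3 -> Ri w1 w3;
  trans_i_idl : forall w w' (i : Ri w w'), trans_i (refl_i w) i = i;
  trans_i_idr : forall w w' (i : Ri w w'), trans_i i (refl_i w') = i;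
  trans_i_assoc : forall w1 w2 w3 w4 (i1 : Ri w1 w2) (i2 : Ri w2 w3) (i3 : Ri w3 w4),
      trans_i (trans_i i1 i2) i3 = trans_i i1 (trans_i i2 i3);
  factor : forall {w v v'}, Rm w v -> Ri v v' -> {w' : W & (Ri w w' * Rm w' v')%type};
  factor_refl_i : forall w v (m : Rm w v),
      factor m (refl_i v) = existT (fun w' => (Ri w w' * Rm w' v)%type) w (refl_i w, m);
  factor_trans_i : forall w v v1 v2 (m : Rm w v) (i1 : Ri v v1) (i2 : Ri v1 v2),
      factor m (trans_i i1 i2)
      = existT (fun w' => (Ri w w' * Rm w' v2)%type)
          (projT1 (factor (snd (projT2 (factor m i1))) i2))
          (trans_i (fst (projT2 (factor m i1)))
                   (fst (projT2 (factor (snd (projT2 (factor m i1))) i2))),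
           snd (projT2 (factor (snd (projT2 (factor m i1))) i2)));
  V : W -> Type;
  monoV : forall {w w'}, Ri w w' -> V w -> V w';
  monoV_refl : forall w (x : V w), monoV (refl_i w) x = x;
  monoV_trans : forall w1 w2 w3 (i1 : Ri w1 w2) (i2 : Ri w2 w3) (x : V w1),
      monoV (trans_i i1 i2) x = monoV i2 (monoV i1 x)
}.
Arguments W {_}. Arguments Ri {_} _ _. Arguments Rm {_} _ _.
Arguments refl_i {_} w. Arguments trans_i {_ w1 w2 w3} _ _.
Arguments factor {_ w v v'} _ _. Arguments V {_} _. Arguments monoV {_ w w'} _ _.

(* The additional structure assumed in the theorem: R_m reflexive and
   transitive, with associativity/unit laws for these proofs and
   functoriality of the factorisation in its R_m argument. *)
Record RmPreorder (M : Model) : Type := {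
  refl_m : forall w : @W M, Rm w w;
  trans_m : forall {w1 w2 w3 : @W M}, Rm w1 w2 -> Rm w2 w3 -> Rm w1 w3;
  trans_m_idl : forall w w' (m : Rm w w'), trans_m (refl_m w) m = m;
  trans_m_idr : forall w w' (m : Rm w w'), trans_m m (refl_m w') = m;
  trans_m_assoc : forall w1 w2 w3 w4 (m1 : Rm w1 w2) (m2 : Rm w2 w3) (m3 : Rm w3 w4),
      trans_m (trans_m m1 m2) m3 = trans_m m1 (trans_m m2 m3);
  factor_refl_m : forall w w' (i : Ri w w'),
      factor (refl_m w) i = existT (fun u => (Ri w u * Rm u w')%type) w' (i, refl_m w');
  factor_trans_m : forall u v w w' (m1 : Rm u v) (m2 : Rm v w) (i : Ri w w'),
      factor (trans_m m1 m2) i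
      = existT (fun u' => (Ri u u' * Rm u' w')%type)
          (projT1 (factor m1 (fst (projT2 (factor m2 i)))))
          (fst (projT2 (factor m1 (fst (projT2 (factor m2 i))))),
           trans_m (snd (projT2 (factor m1 (fst (projT2 (factor m2 i))))))
                   (snd (projT2 (factor m2 i))))
}.
Arguments refl_m {M} _ w. Arguments trans_m {M} _ {w1 w2 w3} m1 m2.

Lemma sig_ext {X : Type} {P : X -> Prop} (a b : {x : X | P x}) :
  proj1_sig a = proj1_sig b -> a = b.
Proof. destruct a, b; simpl; intros ->; f_equal; apply proof_irrelevance. Qed.

Section Semantics.
Context {M : Model}.

Record Psh : Type := {
  Fam :> @W M -> Type;
  pmono : forall {w w'}, Ri w w' -> Fam w -> Fam w';
  pmono_refl : forall w (x : Fam w), pmono (refl_i w) x = x;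
  pmono_trans : forall w1 w2 w3 (i1 : Ri w1 w2) (i2 : Ri w2 w3) (x : Fam w1),
      pmono (trans_i i1 i2) x = pmono i2 (pmono i1 x)
}.
Arguments pmono _ {w w'} _ _.

(* natural transformations ("functions forall w, P w -> Q w" commuting with
   monotonicity) *)
Record NT (P Q : Psh) : Type := {
  nfun : forall w, P w -> Q w;
  nnat : forall w w' (i : Ri w w') (p : P w), nfun w' (pmono P i p) = pmono Q i (nfun w p)
}.

Definition PV : Psh :=
  {| Fam := V; pmono := @monoV M; pmono_refl := @monoV_refl M; pmono_trans := @monoV_trans M |}.

Definition PUnit : Psh.
Proof.
  refine {| Fam := fun _ => unit; pmono := fun _ _ _ x => x |}; reflexivity.
Defined.

Definition PProd (P Q : Psh) : Psh.
Proof.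
  refine {| Fam := fun w => (P w * Q w)%type;
            pmono := fun w w' i x => (pmono P i (fst x), pmono Q i (snd x)) |}.
  - intros w [p q]; simpl; rewrite !pmono_refl; reflexivity.
  - intros w1 w2 w3 i1 i2 [p q]; simpl; rewrite !pmono_trans; reflexivity.
Defined.

Definition ExpF (P Q : Psh) (w : W) : Type :=
  {f : forall w', Ri w w' -> P w' -> Q w' |
    forall w' w'' (i : Ri w w') (j : Ri w' w'') (p : P w'),
      pmono Q j (f w' i p) = f w'' (trans_i i j) (pmono P j p)}.

Definition exp_mono (P Q : Psh) w w' (i : Ri w w') (f : ExpF P Q w) : ExpF P Q w'.
Proof.
  refine (exist _ (fun w'' i' p => proj1_sig f w'' (trans_i i i') p) _).
  intros; simpl. rewrite (proj2_sig f). rewrite trans_i_assoc. reflexivity.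
Defined.

Definition PExp (P Q : Psh) : Psh.
Proof.
  refine {| Fam := ExpF P Q; pmono := exp_mono P Q |}.
  - intros w f; apply sig_ext; simpl.
    extensionality w'; extensionality i; rewrite trans_i_idl; reflexivity.
  - intros w1 w2 w3 i1 i2 f; apply sig_ext; simpl.
    extensionality w'; extensionality i; rewrite trans_i_assoc; reflexivity.
Defined.

Definition BoxF (P : Psh) (w : W) : Type :=
  {f : forall w', Ri w w' -> forall v, Rm w' v -> P v |
    forall w' (i : Ri w w') v (m : Rm w' v) v' (j : Ri v v'),
      pmono P j (f w' i v m)
      = f (projT1 (factor m j)) (trans_i i (fst (projT2 (factor m j))))
          v' (snd (projT2 (factor m j)))}.

Definition box_mono (P : Psh) w w' (i : Ri w w') (f : BoxF P w) : BoxF P w'.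
Proof.
  refine (exist _ (fun w'' i' v m => proj1_sig f w'' (trans_i i i') v m) _).
  intros; simpl. rewrite (proj2_sig f). rewrite trans_i_assoc. reflexivity.
Defined.

Definition PBox (P : Psh) : Psh.
Proof.
  refine {| Fam := BoxF P; pmono := box_mono P |}.
  - intros w f; apply sig_ext; simpl.
    extensionality w'; extensionality i; rewrite trans_i_idl; reflexivity.
  - intros w1 w2 w3 i1 i2 f; apply sig_ext; simpl.
    extensionality w'; extensionality i; rewrite trans_i_assoc; reflexivity.
Defined.

Definition LockF (P : Psh) (w : W) : Type := {u : W & (P u * Rm u w)%type}.

Definition lock_mono (P : Psh) w w' (i : Ri w w') (x : LockF P w) : LockF P w' :=
  existT (fun u => (P u * Rm u w')%type)
    (projT1 (factor (snd (projT2 x)) i))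
    (pmono P (fst (projT2 (factor (snd (projT2 x)) i))) (fst (projT2 x)),
     snd (projT2 (factor (snd (projT2 x)) i))).

Definition PLock (P : Psh) : Psh.
Proof.
  refine {| Fam := LockF P; pmono := lock_mono P |}.
  - intros w [u [p m]]; unfold lock_mono; simpl.
    rewrite factor_refl_i; simpl; rewrite pmono_refl; reflexivity.
  - intros w1 w2 w3 i1 i2 [u [p m]]; unfold lock_mono; simpl.
    rewrite factor_trans_i; simpl; rewrite pmono_trans; reflexivity.
Defined.

Fixpoint tySem (A : Ty) : Psh :=
  match A with
  | Base => PV
  | Arr A B => PExp (tySem A) (tySem B)
  | Box A => PBox (tySem A)
  end.

Fixpoint ctxSem (G : Ctx) : Psh :=
  match G with
  | Nil => PUnit
  | Snoc G A => PProd (ctxSem G) (tySem A)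
  | Lock G => PLock (ctxSem G)
  end.

End Semantics.

Arguments pmono {M} _ {w w'} _ _.
Arguments nfun {M P Q} _ w _.
Arguments nnat {M P Q} _ w w' i p.

Section TermSemantics.
Context {M : Model} (S : RmPreorder M).

Definition nt_comp {P Q R : Psh (M := M)} (g : NT Q R) (f : NT P Q) : NT P R.
Proof.
  refine (@Build_NT _ P R (fun w p => nfun g w (nfun f w p)) _).
  intros; rewrite !nnat; reflexivity.
Defined.

Definition nt_fst {P Q : Psh (M := M)} : NT (PProd P Q) P.
Proof. refine (@Build_NT _ (PProd P Q) P (fun w (x : PProd P Q w) => fst x) _); reflexivity. Defined.

Definition nt_snd {P Q : Psh (M := M)} : NT (PProd P Q) Q.
Proof. refine (@Build_NT _ (PProd P Q) Q (fun w (x : PProd P Q w) => snd x) _); reflexivity. Defined.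

Fixpoint varSem {G A} (x : Var G A) : NT (ctxSem G) (tySem A) :=
  match x in Var G A return NT (ctxSem G) (tySem A) with
  | ze => nt_snd
  | su x => nt_comp (varSem x) nt_fst
  end.

Definition ext_nil_sem (P : Psh (M := M)) : NT P (PLock P).
Proof.
  refine (@Build_NT _ P (PLock P) (fun w p => existT (fun v => (P v * Rm v w)%type) w (p, refl_m S w)) _).
  intros w w' i p; simpl; unfold lock_mono; simpl.
  rewrite factor_refl_m; reflexivity.
Defined.

Definition lock_join_fun (P : Psh (M := M)) w (x : LockF (PLock P) w) : LockF P w :=
  existT (fun v => (P v * Rm v w)%type)
    (projT1 (fst (projT2 x)))
    (fst (projT2 (fst (projT2 x))),
     trans_m S (snd (projT2 (fst (projT2 x)))) (snd (projT2 x))).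

Definition lock_join (P : Psh (M := M)) : NT (PLock (PLock P)) (PLock P).
Proof.
  refine (@Build_NT _ (PLock (PLock P)) (PLock P) (lock_join_fun P) _).
  intros w w' i [u [[v [p m1]] m2]]; unfold lock_join_fun, lock_mono; simpl.
  unfold lock_mono; simpl; rewrite (factor_trans_m _ S); reflexivity.
Defined.

Definition lock_map {P Q : Psh (M := M)} (f : NT P Q) : NT (PLock P) (PLock Q).
Proof.
  refine (@Build_NT _ (PLock P) (PLock Q) (fun w (x : LockF P w) => existT (fun v => (Q v * Rm v w)%type)
                      (projT1 x) (nfun f _ (fst (projT2 x)), snd (projT2 x))) _).
  intros w w' i [u [p m]]; unfold lock_mono; simpl; rewrite nnat; reflexivity.
Defined.

Fixpoint extSem {D G} (e : Ext D G) : NT (ctxSem G) (PLock (ctxSem D)) :=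
  match e in Ext D G return NT (ctxSem G) (PLock (ctxSem D)) with
  | ext_nil => ext_nil_sem _
  | ext_snoc e => nt_comp (extSem e) nt_fst
  | ext_lock e => nt_comp (lock_join _) (lock_map (extSem e))
  end.

Definition curry {P A B : Psh (M := M)} (f : NT (PProd P A) B) : NT P (PExp A B).
Proof.
  unshelve refine (@Build_NT _ P (PExp A B) (fun w p => exist _ (fun w' i (a : A w') => nfun f w' ((pmono P i p, a) : PProd P A w')) _) _).
  - intros w' w'' i j a; simpl.
    rewrite <- (nnat f w' w'' j); simpl. rewrite pmono_trans; reflexivity.
  - intros w w' i p; apply sig_ext; simpl.
    extensionality w''; extensionality i'; extensionality a.
    rewrite pmono_trans; reflexivity.
Defined.

Definition apply {P A B : Psh (M := M)} (f : NT P (PExp A B)) (g : NT P A) : NT P B.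
Proof.
  refine (@Build_NT _ P B (fun w p => proj1_sig (nfun f w p) w (refl_i w) (nfun g w p)) _).
  intros w w' i p.
  rewrite (nnat f), (nnat g); simpl.
  rewrite (proj2_sig (nfun f w p)), trans_i_idl, trans_i_idr; reflexivity.
Defined.

Definition boxI {P A : Psh (M := M)} (f : NT (PLock P) A) : NT P (PBox A).
Proof.
  unshelve refine (@Build_NT _ P (PBox A) (fun w p =>
     exist _ (fun w' i v m =>
        nfun f v ((existT (fun u => (P u * Rm u v)%type) w' (pmono P i p, m)) : PLock P v)) _) _).
  - intros w' i v m v' j; simpl.
    rewrite <- (nnat f); unfold lock_mono; simpl. rewrite pmono_trans; reflexivity.
  - intros w w' i p; apply sig_ext; simpl.
    extensionality w''; extensionality i'; extensionality v; extensionality m.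
    rewrite pmono_trans; reflexivity.
Defined.

Definition unboxE {P Q A : Psh (M := M)} (f : NT Q (PBox A)) (e : NT P (PLock Q))
  : NT P A.
Proof.
  refine (@Build_NT _ P A (fun w p =>
     proj1_sig (nfun f (projT1 (nfun e w p)) (fst (projT2 (nfun e w p))))
       (projT1 (nfun e w p)) (refl_i _) w (snd (projT2 (nfun e w p)))) _).
  intros w w' i p.
  rewrite (nnat e); simpl.
  destruct (nfun e w p) as [v [q m]]; unfold lock_mono; simpl.
  rewrite (nnat f); simpl.
  rewrite (proj2_sig (nfun f v q)), trans_i_idl, trans_i_idr; reflexivity.
Defined.

Fixpoint tmSem {G A} (t : Tm G A) : NT (ctxSem G) (tySem A) :=
  match t in Tm G A return NT (ctxSem G) (tySem A) with
  | var x => varSem x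
  | lam t => curry (tmSem t)
  | app t u => apply (tmSem t) (tmSem u)
  | box t => boxI (tmSem t)
  | unbox t e => unboxE (tmSem t) (extSem e)
  end.

End TermSemantics.

From Stdlib Require Import FunctionalExtensionality ProofIrrelevance.

(* The
   congruence cases are immediate, and each beta/eta rule reduces to the
   substitution lemma [[t[s]]] = [[t]] o [[s]], where a substitution
   s : Sub G D is interpreted as a natural map [[G]] -> [[D]] whose lock
   components go through the interpretation of the accompanying extension.
   Composition of extensions is interpreted by transitivity of R_m, so its
   unit and associativity laws are what make the factorisation of a
   substitution along an extension (the unbox case) sound.  Renaming and
   substitution are two instances of a single environment traversal, so the
   substitution lemma is proved once; the renaming instance yields the
   semantics of weakening, which the substitution instance needs. *)

Record Kit (E : Ctx -> Ty -> Type) : Type := {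
  kit_tm : forall G A, E G A -> Tm G A;
  kit_wk : forall G A B, E G A -> E (Snoc G B) A;
  kit_ze : forall G A, E (Snoc G A) A
}.
Arguments kit_tm {E} k {G A} x.
Arguments kit_wk {E} k {G A} B x.
Arguments kit_ze {E} k {G A}.

Section Traversal.
Context {E : Ctx -> Ty -> Type} (K : Kit E).

Fixpoint Env (G D : Ctx) : Type :=
  match D with
  | Nil => unit
  | Snoc D A => (Env G D * E G A)%type
  | Lock D => {G' : Ctx & (Env G' D * Ext G' G)%type}
  end.

Fixpoint wkEnv G B D {struct D} : Env G D -> Env (Snoc G B) D :=
  match D return Env G D -> Env (Snoc G B) D with
  | Nil => fun _ => tt
  | Snoc D A => fun r => (wkEnv G B D (fst r), kit_wk K B (snd r))
  | Lock D => fun r =>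
      existT (fun G' => (Env G' D * Ext G' (Snoc G B))%type)
             (projT1 r) (fst (projT2 r), ext_snoc (snd (projT2 r)))
  end.

Fixpoint idEnv G : Env G G :=
  match G return Env G G with
  | Nil => tt
  | Snoc G A => (wkEnv G A G (idEnv G), kit_ze K)
  | Lock G => existT (fun G' => (Env G' G * Ext G' (Lock G))%type)
                     G (idEnv G, ext_lock ext_nil)
  end.

Fixpoint lookup G D A (x : Var D A) {struct x} : Env G D -> E G A :=
  match x in Var D A return Env G D -> E G A with
  | ze => fun r => snd r
  | su x => fun r => lookup G _ _ x (fst r)
  end.

Fixpoint factorEnv G D0 D (e : Ext D0 D) {struct e}
  : Env G D -> {G0 : Ctx & (Env G0 D0 * Ext G0 G)%type} :=
  match e in Ext D0 D return Env G D -> {G0 : Ctx & (Env G0 D0 * Ext G0 G)%type} with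
  | ext_nil => fun r => existT _ G (r, ext_nil)
  | ext_snoc e => fun r => factorEnv G _ _ e (fst r)
  | ext_lock e => fun r =>
      let f := factorEnv (projT1 r) _ _ e (fst (projT2 r)) in
      existT _ (projT1 f) (fst (projT2 f), ext_trans (snd (projT2 f)) (snd (projT2 r)))
  end.

Fixpoint traverse G D A (t : Tm D A) {struct t} : Env G D -> Tm G A :=
  match t in Tm D A return Env G D -> Tm G A with
  | var x => fun r => kit_tm K (lookup G _ _ x r)
  | @lam D A B t => fun r =>
      lam (traverse (Snoc G A) _ _ t ((wkEnv G A D r, kit_ze K) : Env (Snoc G A) (Snoc D A)))
  | app t u => fun r => app (traverse G _ _ t r) (traverse G _ _ u r)
  | @box D A t => fun r =>
      box (traverse (Lock G) _ _ t (existT (fun G' => (Env G' D * Ext G' (Lock G))%type)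
                         G (r, ext_lock ext_nil) : Env (Lock G) (Lock D)))
  | unbox t e => fun r =>
      let f := factorEnv G _ _ e r in
      unbox (traverse (projT1 f) _ _ t (fst (projT2 f))) (snd (projT2 f))
  end.

End Traversal.
Arguments Env E G D : clear implicits.
Arguments wkEnv {E} K {G} B {D} r.
Arguments idEnv {E} K G.
Arguments lookup {E G D A} x r.
Arguments factorEnv {E G D0 D} e r.
Arguments traverse {E} K {G D A} t r.

Definition RenKit : Kit Var := {| kit_tm := @var; kit_wk := @su; kit_ze := @ze |}.
Definition SubKit : Kit Tm :=
  {| kit_tm := fun _ _ t => t; kit_wk := fun _ _ B t => wkTm B t; kit_ze := fun _ _ => var ze |}.

Lemma ren_traverse G D A (t : Tm D A) (r : Ren G D) : ren t r = traverse RenKit t r.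
Proof. reflexivity. Qed.

Lemma subst_traverse G D A (t : Tm D A) (s : Sub G D) : subst t s = traverse SubKit t s.
Proof. reflexivity. Qed.

Lemma wkRen_wkEnv G B D (r : Ren G D) : wkRen B r = wkEnv RenKit B r.
Proof. reflexivity. Qed.

Lemma idRen_idEnv G : idRen G = idEnv RenKit G.
Proof. reflexivity. Qed.

Lemma idSub_idEnv G : idSub G = idEnv SubKit G.
Proof. reflexivity. Qed.

Section Soundness.
Context {M : Model} (S : RmPreorder M).

Lemma NT_eq {P Q : Psh (M := M)} (f g : NT P Q) : nfun f = nfun g -> f = g.
Proof.
  destruct f as [f nf], g as [g ng]; simpl; intros ->.
  f_equal; apply proof_irrelevance.
Qed.

Definition nt_unit {P : Psh (M := M)} : NT P PUnit.
Proof. refine (@Build_NT _ P PUnit (fun _ _ => tt) _); reflexivity. Defined.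

Definition nt_pair {P Q R : Psh (M := M)} (f : NT P Q) (g : NT P R) : NT P (PProd Q R).
Proof.
  refine (@Build_NT _ P (PProd Q R) (fun w p => (nfun f w p, nfun g w p)) _).
  intros; simpl; rewrite !nnat; reflexivity.
Defined.

Lemma extSem_trans D G G' (e1 : Ext D G) (e2 : Ext G G') w g :
  nfun (extSem S (ext_trans e1 e2)) w g
  = nfun (nt_comp (lock_join S _) (nt_comp (lock_map (extSem S e1)) (extSem S e2))) w g.
Proof.
  revert w g; induction e2 as [G|G G' A e2 IH|G G' e2 IH]; intros w g; simpl.
  - destruct (nfun (extSem S e1) w g) as [u [p m]]; simpl.
    unfold lock_join_fun; simpl; rewrite trans_m_idr; reflexivity.
  - apply IH.
  - destruct g as [v [x m]]; simpl; rewrite IH; simpl.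
    destruct (nfun (extSem S e2) v x) as [u [y m1]]; simpl.
    destruct (nfun (extSem S e1) u y) as [u' [z m2]]; simpl.
    unfold lock_join_fun; simpl; rewrite trans_m_assoc; reflexivity.
Qed.

Section KitSemantics.
Context {E : Ctx -> Ty -> Type} (K : Kit E).

Fixpoint envSem {G D} : Env E G D -> NT (ctxSem G) (ctxSem D) :=
  match D return Env E G D -> NT (ctxSem G) (ctxSem D) with
  | Nil => fun _ => nt_unit
  | Snoc D A => fun r => nt_pair (envSem (fst r)) (tmSem S (kit_tm K (snd r)))
  | Lock D => fun r =>
      nt_comp (lock_map (envSem (fst (projT2 r)))) (extSem S (snd (projT2 r)))
  end.

Hypothesis kit_wk_sem : forall G A B (x : E G A),
  tmSem S (kit_tm K (kit_wk K B x)) = nt_comp (tmSem S (kit_tm K x)) nt_fst.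
Hypothesis kit_ze_sem : forall G A, tmSem S (kit_tm K (kit_ze K (G := G) (A := A))) = nt_snd.

Lemma lookup_sem G D A (x : Var D A) (r : Env E G D) w g :
  nfun (tmSem S (kit_tm K (lookup x r))) w g = nfun (varSem x) w (nfun (envSem r) w g).
Proof. induction x; simpl; [reflexivity | apply IHx]. Qed.

Lemma factorEnv_sem G D0 D (e : Ext D0 D) (r : Env E G D) w g :
  nfun (extSem S e) w (nfun (envSem r) w g)
  = nfun (nt_comp (lock_map (envSem (fst (projT2 (factorEnv e r)))))
                  (extSem S (snd (projT2 (factorEnv e r))))) w g.
Proof.
  revert G r w g; induction e as [D|D0 D A e IH|D0 D e IH]; intros G r w g; simpl.
  - reflexivity.
  - apply IH.
  - destruct r as [G' [r e']]; simpl.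
    rewrite extSem_trans; simpl.
    destruct (nfun (extSem S e') w g) as [v [x m]]; simpl.
    rewrite IH; reflexivity.
Qed.

Lemma wkEnv_sem G B D (r : Env E G D) w (g : ctxSem G w) (a : tySem B w) :
  nfun (envSem (wkEnv K B r)) w (g, a) = nfun (envSem r) w g.
Proof.
  induction D as [|D IH A|D IH]; simpl; [| rewrite IH, kit_wk_sem |]; reflexivity.
Qed.

Lemma idEnv_sem G w g : nfun (envSem (idEnv K G)) w g = g.
Proof.
  revert w g; induction G as [|G IH A|G IH]; intros w g; simpl.
  - destruct g; reflexivity.
  - destruct g as [g a]; simpl; rewrite kit_ze_sem; f_equal.
    etransitivity; [apply wkEnv_sem | apply IH].
  - destruct g as [v [x m]]; simpl.
    unfold lock_join_fun; simpl; rewrite IH, trans_m_idl; reflexivity.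
Qed.

Lemma traverse_sem G D A (t : Tm D A) (r : Env E G D) w g :
  nfun (tmSem S (traverse K t r)) w g = nfun (tmSem S t) w (nfun (envSem r) w g).
Proof.
  revert G r w g; induction t as [D A x|D A B t IH|D A B t IHt u IHu|D A t IH|D0 D A t IH e];
    intros G r w g; simpl.
  - apply lookup_sem.
  - apply sig_ext; simpl.
    extensionality w'; extensionality i; extensionality a.
    etransitivity; [apply (IH (Snoc G A))|]; f_equal; simpl; f_equal.
    + etransitivity; [apply wkEnv_sem | apply nnat].
    + rewrite kit_ze_sem; reflexivity.
  - rewrite IHt, IHu; reflexivity.
  - apply sig_ext; simpl.
    extensionality w'; extensionality i; extensionality v; extensionality m.
    etransitivity; [apply (IH (Lock G))|]; f_equal; simpl; unfold lock_join_fun; simpl.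
    rewrite trans_m_idl, (nnat (envSem r)); reflexivity.
  - rewrite factorEnv_sem; simpl.
    destruct (nfun (extSem S (snd (projT2 (factorEnv e r)))) w g) as [v [x m]]; simpl.
    rewrite IH; reflexivity.
Qed.

End KitSemantics.

Lemma ren_sem G D A (t : Tm D A) (r : Ren G D) w g :
  nfun (tmSem S (ren t r)) w g = nfun (tmSem S t) w (nfun (envSem RenKit r) w g).
Proof. rewrite ren_traverse; apply traverse_sem; reflexivity. Qed.

Lemma wkTm_sem G A B (t : Tm G A) : tmSem S (wkTm B t) = nt_comp (tmSem S t) nt_fst.
Proof.
  apply NT_eq; extensionality w; extensionality g; destruct g as [g a].
  unfold wkTm; rewrite ren_sem; simpl; f_equal.
  rewrite wkRen_wkEnv, idRen_idEnv.
  etransitivity; [apply wkEnv_sem | apply idEnv_sem]; reflexivity.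
Qed.

Lemma subst_sem G D A (t : Tm D A) (s : Sub G D) w g :
  nfun (tmSem S (subst t s)) w g = nfun (tmSem S t) w (nfun (envSem SubKit s) w g).
Proof. rewrite subst_traverse; apply traverse_sem; [apply wkTm_sem | reflexivity]. Qed.

Lemma idSub_sem G w g : nfun (envSem SubKit (idSub G)) w g = g.
Proof. rewrite idSub_idEnv; apply idEnv_sem; [apply wkTm_sem | reflexivity]. Qed.

Lemma fun_beta_sem G A B (t : Tm (Snoc G A) B) (u : Tm G A) :
  nfun (tmSem S (app (lam t) u))
  = nfun (tmSem S (subst t ((idSub G, u) : Sub G (Snoc G A)))).
Proof.
  extensionality w; extensionality g.
  rewrite subst_sem; simpl; rewrite idSub_sem, pmono_refl; reflexivity.
Qed.

Lemma fun_eta_sem G A B (t : Tm G (Arr A B)) :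
  nfun (tmSem S t) = nfun (tmSem S (lam (app (wkTm A t) (var ze)))).
Proof.
  extensionality w; extensionality g; cbn [tmSem]; rewrite wkTm_sem.
  apply sig_ext; simpl; extensionality w'; extensionality i; extensionality a.
  rewrite (nnat (tmSem S t)); simpl; rewrite trans_i_idr; reflexivity.
Qed.

Lemma box_beta_sem D G A (t : Tm (Lock D) A) (e : Ext D G) :
  nfun (tmSem S (unbox (box t) e))
  = nfun (tmSem S (subst t (existT (fun G' => (Sub G' D * Ext G' G)%type) D (idSub D, e)
                            : Sub G (Lock D)))).
Proof.
  extensionality w; extensionality g.
  rewrite subst_sem; simpl.
  destruct (nfun (extSem S e) w g) as [v [x m]]; simpl.
  rewrite pmono_refl, idSub_sem; reflexivity.
Qed.

Lemma box_eta_sem G A (t : Tm G (Box A)) :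
  nfun (tmSem S t) = nfun (tmSem S (box (unbox t (ext_lock ext_nil)))).
Proof.
  extensionality w; extensionality g; apply sig_ext; simpl.
  extensionality w'; extensionality i; extensionality v; extensionality m.
  unfold lock_join_fun; simpl; rewrite trans_m_idl, (nnat (tmSem S t)); simpl.
  rewrite trans_i_idr; reflexivity.
Qed.

End Soundness.

Theorem theorem3 (M : Model) (S : RmPreorder M) (G : Ctx) (A : Ty) (t u : Tm G A) :
  Conv t u -> nfun (tmSem S t) = nfun (tmSem S u).
Proof.
  induction 1; cbn [tmSem].
  - reflexivity.
  - symmetry; assumption.
  - etransitivity; eassumption.
  - do 2 f_equal; apply NT_eq; assumption.
  - do 2 f_equal; apply NT_eq; assumption.
  - do 2 f_equal; apply NT_eq; assumption.
  - do 2 f_equal; apply NT_eq; assumption.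
  - apply fun_beta_sem.
  - apply fun_eta_sem.
  - apply box_beta_sem.
  - apply box_eta_sem.
Qed.
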